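(* Let $\pi\in\mathfrak{S}_n$ avoid $231$, and let $(a,c,b)$ and $(d,f,e)$ be $3$-cycles in the disjoint cycle decomposition of $\pi$ with $a<b<c$, $d<e<f$ and $a<d$. Then one of the following holds: (1) $c<d$ (so that each of $a,b,c$ is less than each of $d,e,f$); (2) $c>f$ and $d<b<e$; (3) $c>f$ and $e<b<f$.
   Context: A permutation avoids $231$ if there are no indices $i<j<k$ with $\pi_k<\pi_i<\pi_j$. The cycle $(a,c,b)$ means $a\mapsto c\mapsto b\mapsto a$. *)

From mathcomp Require Import all_boot all_order all_fingroup.
Set Implicit Arguments. Unset Strict Implicit. Unset Printing Implicit Defensive.

Definition avoids231 (n : nat) (s : 'S_n) : Prop :=
  ~ exists i j k : 'I_n, [/\ i < j, j < k & s k < s i < s j].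

Definition is_3cycle (n : nat) (s : 'S_n) (x y z : 'I_n) : Prop :=
  [/\ x != y, y != z, x != z & [/\ s x = y, s y = z & s z = x]].

From mathcomp Require Import all_boot all_order all_fingroup.
From mathcomp Require Import zify.

Set Implicit Arguments.
Unset Strict Implicit.
Unset Printing Implicit Defensive.

(* The two 3-cycles are disjoint: a common element would put a, which lies on
   the first cycle, into {d, e, f}, whose elements all exceed a.  If d <= c,
   231-avoidance applied to the triples (a, d, e), (e, f, c) and (e, f, b)
   forces f < c, d < b and b < f; it remains to compare b with e. *)

Lemma avoids231_lt n (s : 'S_n) (i j k : 'I_n) :
  avoids231 s -> i < j -> j < k -> s i < s j -> s i < s k.
Proof.
move=> s231 lt_ij lt_jk lt_sij; rewrite ltn_neqAle; apply/andP; split.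
  by rewrite val_eqE (inj_eq perm_inj) -val_eqE /=; lia.
by rewrite leqNgt; apply/negP=> lt_ski; apply: s231; exists i, j, k; rewrite lt_ski.
Qed.

Lemma is_3cycle_closed n (s : 'S_n) (x y z t : 'I_n) :
  is_3cycle s x y z -> t \in [:: x; y; z] -> s t \in [:: x; y; z].
Proof.
case=> _ _ _ [sx sy sz].
by rewrite !inE => /or3P[]/eqP->; rewrite ?sx ?sy ?sz eqxx ?orbT.
Qed.

Lemma is_3cycle_meet n (s : 'S_n) (x y z u v w t : 'I_n) :
  is_3cycle s x y z -> is_3cycle s u v w ->
  t \in [:: x; y; z] -> t \in [:: u; v; w] -> x \in [:: u; v; w].
Proof.
move=> [_ _ _ [_ sy sz]] cu tx tu; rewrite !inE in tx; case/or3P: tx => /eqP eq_t.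
- by rewrite eq_t in tu.
- by rewrite -sz -sy; do 2 apply: (is_3cycle_closed cu); rewrite -eq_t.
- by rewrite -sz; apply: (is_3cycle_closed cu); rewrite -eq_t.
Qed.

Theorem lemma3p3 (n : nat) (s : 'S_n) (a b c d e f : 'I_n) :
  avoids231 s ->
  is_3cycle s a c b -> is_3cycle s d f e ->
  a < b -> b < c -> d < e -> e < f -> a < d ->
  c < d \/ (f < c /\ d < b < e) \/ (f < c /\ e < b < f).
Proof.
move=> s231 acb dfe lt_ab lt_bc lt_de lt_ef lt_ad.
have [_ _ _ [sa sc sb]] := acb; have [_ _ _ [sd sf se]] := dfe.
have apart t u : t \in [:: a; c; b] -> u \in [:: d; f; e] -> (t : nat) != u.
  move=> ta ud; rewrite val_eqE; apply/eqP=> eq_tu; move: ud; rewrite -eq_tu.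
  by move=> /(is_3cycle_meet acb dfe ta); rewrite !inE -!val_eqE /=; lia.
have [ne_cf ne_bf ne_be] : [/\ (c : nat) != f, (b : nat) != f & (b : nat) != e].
  by split; apply: apart; rewrite !inE eqxx ?orbT.
have lt_img_f (k : 'I_n) : f < k -> d < s k.
  by move=> lt_fk; rewrite -se (avoids231_lt s231 lt_ef) // sf se.
have := avoids231_lt s231 lt_ad lt_de; rewrite sa sd se => lt_cf_cd.
case: (ltnP c d) => [|le_dc]; [by left | right].
have lt_fc : f < c by lia.
have lt_db : d < b by rewrite -sc lt_img_f.
have lt_bf : b < f by have := lt_img_f b; rewrite sb; lia.
lia.
Qed.
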